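(* Let $p$ be a prime and $G$ a non-abelian group of order $p^m$ with $|Z(G)|=p^{m-2}$. Then $\mathrm{Spec}(\Gamma_G)=\{[0]^{(p+1)((p-1)p^{m-3}-1)},[-(p-1)p^{m-3}]^{p},[(p-1)p^{m-2}]^1\}$, $\mathrm{L\text{-}Spec}(\Gamma_G)=\{[0]^1,[(p-1)p^{m-2}]^{(p+1)((p-1)p^{m-3}-1)},[(p^2-1)p^{m-3}]^{p}\}$, $\mathrm{Q\text{-}Spec}(\Gamma_G)=\{[(p-1)p^{m-2}]^{(p+1)((p-1)p^{m-3}-1)},[(p-1)^2p^{m-3}]^{p},[2(p-1)p^{m-2}]^1\}$, and $E(\Gamma_G)=LE(\Gamma_G)=SE(\Gamma_G)=2(p-1)p^{m-2}$.
   Context: For a finite non-abelian group $G$ with center $Z(G)$ and $x\in G$, $x^G$ is the conjugacy class of $x$. The NCCC-graph $\Gamma_G$ is the simple graph with vertex set $\{x^G: x\in G\setminus Z(G)\}$, distinct vertices $x^G,y^G$ adjacent iff $x'y'\neq y'x'$ for all $x'\in x^G,y'\in y^G$. For a simple graph with adjacency matrix $A$, degree matrix $D$, $L=D-A$, $Q=D+A$; Spec, L-Spec, Q-Spec are the eigenvalue multisets of $A,L,Q$, written with $[\lambda]^k$ meaning eigenvalue $\lambda$ of multiplicity $k$. $E=\sum_{\lambda\in\mathrm{Spec}}|\lambda|$; with $\Delta=2|E(\mathcal G)|/|V(\mathcal G)|$, $LE=\sum_{\beta\in\mathrm{L\text{-}Spec}}|\beta-\Delta|$, $SE=\sum_{\gamma\in\mathrm{Q\text{-}Spec}}|\gamma-\Delta|$.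 *)

From HB Require Import structures.
From mathcomp Require Import all_boot all_order all_algebra all_fingroup all_solvable all_field.
Set Implicit Arguments. Unset Strict Implicit. Unset Printing Implicit Defensive.
Import Order.TTheory GRing.Theory Num.Theory.
Local Open Scope ring_scope.

Section NCCC.
Variable gT : finGroupType.
Variable G : {group gT}.

Definition nccc_vertices : {set {set gT}} :=
  ([set x ^: G | x in G :\: 'Z(G)])%g.

Definition nccc_adj (C D : {set gT}) : bool :=
  (C != D) && [forall x in C, forall y in D, (x * y)%g != (y * x)%g].

Definition nccc_n := #|nccc_vertices|.

Definition nccc_A : 'M[algC]_nccc_n :=
  \matrix_(i, j) (nccc_adj (enum_val i) (enum_val j))%:R.

Definition nccc_D : 'M[algC]_nccc_n :=
  diag_mx (\row_i \sum_j nccc_A i j).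

Definition nccc_L : 'M[algC]_nccc_n := nccc_D - nccc_A.
Definition nccc_Q : 'M[algC]_nccc_n := nccc_D + nccc_A.

(* Delta = 2|E|/|V| (sum of degrees = 2|E|) *)
Definition nccc_Delta : algC :=
  (\sum_i \sum_j nccc_A i j) / nccc_n%:R.
End NCCC.

(* s is the multiset of eigenvalues of M (roots of the characteristic
   polynomial, counted with multiplicity) *)
Definition is_spectrum (n : nat) (M : 'M[algC]_n) (s : seq algC) : Prop :=
  char_poly M = \prod_(l <- s) ('X - l%:P).

(* [l]^k written as nseq k l *)

From mathcomp Require Import all_boot all_order all_algebra all_fingroup all_solvable all_field.
From mathcomp Require Import zify.
Import Order.TTheory GRing.Theory Num.Theory.
Set Implicit Arguments. Unset Strict Implicit. Unset Printing Implicit Defensive.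

(* G / 'Z(G) has order p^2, so the centraliser of a non-central x has order p^(m-1),
   its class has size p, and two non-central elements commute iff they have the same
   centraliser.  Hence the NCCC-graph is complete multipartite with p + 1 parts of
   a = (p-1)p^(m-3) classes each.  Its adjacency matrix A = J - P, with P the
   same-part indicator, satisfies A (A + a) (A - p a) = 0, so A is diagonalisable with eigenvalues among 0, -a, p a,
   and tr A = 0, tr A^2 = n (n - a) fix their multiplicities.  The graph is regular of
   degree b = p a, so L = b - A and Q = b + A. *)

Local Open Scope ring_scope.

Section Similarity.
Variable F : fieldType.

Lemma char_poly_uconj n (V f : 'M[F]_n) : V \in unitmx ->
  char_poly (V *m f *m invmx V) = char_poly f.
Proof.
move=> Vu; rewrite /char_poly /char_poly_mx.
set Vp := map_mx polyC V; set Vi := map_mx polyC (invmx V).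
have VpVi : Vp *m Vi = 1%:M by rewrite -map_mxM mulmxV // map_mx1.
have -> : 'X%:M - map_mx polyC (V *m f *m invmx V) = Vp *m ('X%:M - map_mx polyC f) *m Vi.
  rewrite !map_mxM -/Vp -/Vi mulmxBr mulmxBl; congr (_ - _).
  by rewrite mul_mx_scalar -scalemxAl VpVi scalemx1.
by rewrite !det_mulmx mulrAC -det_mulmx VpVi det1 mul1r.
Qed.

Lemma mxtrace_uconj n (V f : 'M[F]_n) : V \in unitmx -> \tr (V *m f *m invmx V) = \tr f.
Proof. by move=> Vu; rewrite mxtrace_mulC mulmxA mulVmx ?mul1mx. Qed.

Lemma mulmx_uconj n (V f g : 'M[F]_n) : V \in unitmx ->
  (V *m f *m invmx V) *m (V *m g *m invmx V) = V *m (f *m g) *m invmx V.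
Proof. by move=> Vu; rewrite !mulmxA mulmxKV. Qed.

Lemma uconj_affine n (V f : 'M[F]_n) (c e : F) : V \in unitmx ->
  c%:M + e *: (V *m f *m invmx V) = V *m (c%:M + e *: f) *m invmx V.
Proof.
move=> Vu; rewrite mulmxDr mulmxDl mul_mx_scalar -scalemxAl mulmxV //.
by rewrite scalemx1 -scalemxAr -scalemxAl.
Qed.

Lemma char_poly_uconj_diag n (V : 'M[F]_n) (d : 'rV[F]_n) (c e : F) : V \in unitmx ->
  char_poly (c%:M + e *: (V *m diag_mx d *m invmx V)) = \prod_i ('X - (c + e * d 0 i)%:P).
Proof.
move=> Vu; rewrite uconj_affine // char_poly_uconj //.
rewrite -diag_const_mx -linearZ -linearD char_poly_trig ?diag_mx_is_trig //=.
by apply: eq_bigr => i _; rewrite !mxE eqxx mulr1n.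
Qed.

Lemma uconj_diag_split_annihilator n (A : 'M[F]_n.+1) (rs : seq F) : uniq rs ->
  horner_mx A (\prod_(r <- rs) ('X - r%:P)) = 0 ->
  exists V (d : 'rV[F]_n.+1),
    [/\ V \in unitmx, A = V *m diag_mx d *m invmx V & forall i, d 0 i \in rs].
Proof.
move=> uniq_rs annA.
have [P Pu /(diagonalizable_forLR Pu)[d eA]] : diagonalizable A.
  by apply/diagonalizableP; exists rs => //; apply: mxminpoly_min.
have Vu : invmx P \in unitmx by rewrite unitmx_inv.
have {}eA : A = invmx P *m diag_mx d *m invmx (invmx P).
  (* [diagonalizable_forLR] uses the copy of [conjmx] from mxpoly, not the one from mxred. *)
  by rewrite eA mxpoly.conjumx.
exists (invmx P), d; split=> // i.
have : root (mxminpoly (diag_mx d)) (d 0 i).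
  by rewrite mxminpoly_diag root_prod_XsubC mem_undup map_f ?mem_enum.
rewrite root_mxminpoly -(char_poly_uconj _ Vu) -eA -root_mxminpoly -root_prod_XsubC.
exact/root_dvdp/mxminpoly_min.
Qed.
End Similarity.

Lemma sum_nat_pred (I : finType) (b : pred I) : (\sum_i (b i : nat))%N = #|b|.
Proof.
rewrite -sum1_card [RHS]big_mkcond /=; apply: eq_bigr => i _.
by rewrite unfold_in; case: (b i).
Qed.

Lemma sum_three_values (R : nmodType) (S : eqType) n (d : 'I_n -> S) (g : S -> R)
    (x y z : S) :
  (forall i, d i \in [:: x; y; z]) -> x != y -> x != z -> y != z ->
  \sum_i g (d i) = g x *+ #|[pred i | d i == x]| + g y *+ #|[pred i | d i == y]|
                   + g z *+ #|[pred i | d i == z]|.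
Proof.
move=> d_xyz neq_xy neq_xz neq_yz.
rewrite -!sum_nat_pred -!sumrMnr -!big_split /=; apply: eq_bigr => i _.
have ne_xyz := (negbTE neq_xy, negbTE neq_xz, negbTE neq_yz).
by move: (d_xyz i); rewrite !inE => /or3P[] /eqP ->;
  rewrite !eqxx ?[y == x]eq_sym ?[z == _]eq_sym ?ne_xyz ?mulr0n ?mulr1n ?addr0 ?add0r.
Qed.

Lemma prod_three_values (R : comNzRingType) (S : eqType) n (d : 'I_n -> S) (g : S -> R)
    (x y z : S) :
  (forall i, d i \in [:: x; y; z]) -> x != y -> x != z -> y != z ->
  \prod_i g (d i) = g x ^+ #|[pred i | d i == x]| * g y ^+ #|[pred i | d i == y]|
                    * g z ^+ #|[pred i | d i == z]|.
Proof.
move=> d_xyz neq_xy neq_xz neq_yz.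
rewrite -!sum_nat_pred -!prodrXr -!big_split /=; apply: eq_bigr => i _.
have ne_xyz := (negbTE neq_xy, negbTE neq_xz, negbTE neq_yz).
by move: (d_xyz i); rewrite !inE => /or3P[] /eqP ->;
  rewrite !eqxx ?[y == x]eq_sym ?[z == _]eq_sym ?ne_xyz ?expr0 ?expr1 ?mulr1 ?mul1r.
Qed.

Section CompleteMultipartiteSpectrum.
Variables (R : numFieldType) (n s q : nat) (d : 'I_n -> R).
Hypotheses (s_gt0 : (0 < s)%N) (q_gt0 : (0 < q)%N) (n_eq : n = (q.+1 * s)%N).

Lemma complete_multipartite_eigenvalues_neq :
  [/\ 0 != - s%:R :> R, 0 != (q * s)%:R :> R & - s%:R != (q * s)%:R :> R].
Proof.
rewrite ![0 == _]eq_sym oppr_eq0 !pnatr_eq0 -!lt0n muln_gt0 s_gt0 q_gt0.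
by rewrite eq_sym -subr_eq0 opprK -natrD pnatr_eq0 -lt0n addn_gt0 s_gt0 orbT.
Qed.

Hypotheses (d_eigen : forall i, d i \in [:: 0; - s%:R; (q * s)%:R])
  (sum_d : \sum_i d i = 0) (sum_d2 : \sum_i d i ^+ 2 = (n * (n - s))%:R).

(* The multiplicities are forced by the first two power sums. *)
Lemma card_complete_multipartite_eigenvalues :
  [/\ #|[pred i | d i == 0]| = (n - q.+1)%N, #|[pred i | d i == - s%:R]| = q
    & #|[pred i | d i == (q * s)%:R]| = 1%N].
Proof.
have [ne01 ne02 ne12] := complete_multipartite_eigenvalues_neq.
have sum3 (g : R -> R) := sum_three_values g d_eigen ne01 ne02 ne12.
set c0 := #|[pred i | d i == 0]| in sum3 *.
set c1 := #|[pred i | d i == - s%:R]| in sum3 *.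
set c2 := #|[pred i | d i == (q * s)%:R]| in sum3 *.
have c012 : (c0 + c1 + c2 = n)%N.
  have := sum3 (fun=> 1); rewrite sumr_const card_ord -!natrD.
  by move/eqP; rewrite eqr_nat => /eqP ->.
have c12 : (s * c1 = q * s * c2)%N.
  have := sum3 id; rewrite sum_d mul0rn add0r mulNrn -!mulrnA => /eqP.
  by rewrite eq_sym addrC subr_eq0 eqr_nat => /eqP ->.
have c2_eq1 : c2 = 1%N.
  have := sum3 (fun x => x ^+ 2); rewrite sum_d2 expr0n mul0rn add0r sqrrN -!natrX.
  rewrite -!mulrnA -natrD => /eqP; rewrite eqr_nat => /eqP.
  rewrite n_eq; move: c12 s_gt0 q_gt0; nia.
have c1_eq : c1 = q by move: c12; rewrite c2_eq1; nia.
by split=> //; move: c012; rewrite c1_eq c2_eq1; lia.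
Qed.
End CompleteMultipartiteSpectrum.

Lemma horner_mx_prod_XsubC (R : comNzRingType) n (A : 'M[R]_n.+1) (rs : seq R) :
  horner_mx A (\prod_(r <- rs) ('X - r%:P)) = \prod_(r <- rs) (A - r%:M).
Proof.
by rewrite rmorph_prod; apply: eq_bigr => r _; rewrite rmorphB /= horner_mx_X horner_mx_C.
Qed.

Definition complete_multipartite_mx (R : nzSemiRingType) (T : eqType) n (part : 'I_n -> T)
  : 'M[R]_n := \matrix_(i, j) (part i != part j)%:R.

Section CompleteMultipartiteGraph.
Variables (R : numFieldType) (T : eqType) (n : nat) (part : 'I_n -> T) (s q : nat).
Hypotheses (card_part : forall i, #|[pred j | part j == part i]| = s)
  (n_eq : n = (q.+1 * s)%N).

Local Notation A := (complete_multipartite_mx R part).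
Local Notation J := (const_mx 1 : 'M[R]_n).
Let P : 'M[R]_n := \matrix_(i, j) (part i == part j)%:R.

Let sum_part i : \sum_j ((part j == part i)%:R : R) = s%:R.
Proof. by rewrite -natr_sum sum_nat_pred card_part. Qed.

Let nR_sub_s : n%:R - s%:R = (q * s)%:R :> R.
Proof. by rewrite n_eq mulSnr natrD addrK. Qed.

Lemma complete_multipartite_mx_row_sum i : \sum_j A i j = (q * s)%:R.
Proof.
have -> : \sum_j A i j = \sum_j (1 - (part j == part i)%:R).
  by apply: eq_bigr => j _; rewrite mxE eq_sym; case: eqP; rewrite ?subr0 ?subrr.
by rewrite sumrB sumr_const card_ord sum_part.
Qed.

Let AE : A = J - P.
Proof. by apply/matrixP => i j; rewrite !mxE; case: eqP; rewrite ?subrr ?subr0. Qed.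

Let PP : P *m P = s%:R *: P.
Proof.
apply/matrixP => i j; rewrite !mxE -(sum_part j) mulr_suml.
apply: eq_bigr => k _; rewrite !mxE -!natrM !mulnb; congr (_%:R).
by case: (eqVneq (part k) (part j)) => [->|_]; rewrite ?andbT ?andbF.
Qed.

Let JP : J *m P = s%:R *: J.
Proof.
apply/matrixP => i j; rewrite !mxE mulr1 -(sum_part j).
by apply: eq_bigr => k _; rewrite !mxE mul1r.
Qed.

Let PJ : P *m J = s%:R *: J.
Proof.
apply/matrixP => i j; rewrite !mxE mulr1 -(sum_part i).
by apply: eq_bigr => k _; rewrite !mxE mulr1 eq_sym.
Qed.

Let JJ : J *m J = n%:R *: J.
Proof.
apply/matrixP => i j; rewrite !mxE mulr1 -[n in RHS]card_ord -sumr_const.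
by apply: eq_bigr => k _; rewrite !mxE mulr1.
Qed.

Let JA : J *m A = (q * s)%:R *: J.
Proof. by rewrite AE mulmxBr JJ JP -scalerBl nR_sub_s. Qed.

Let AJ : A *m J = (q * s)%:R *: J.
Proof. by rewrite AE mulmxBl JJ PJ -scalerBl nR_sub_s. Qed.

Let AP : A *m P = s%:R *: A.
Proof. by rewrite AE mulmxBl JP PP -scalerBr. Qed.

Lemma complete_multipartite_mx_sqr : A *m A = (q * s)%:R *: J - s%:R *: A.
Proof. by rewrite {2}AE mulmxBr AJ AP. Qed.

Lemma complete_multipartite_mx_cubic :
  A *m (A + s%:R%:M) *m (A - (q * s)%:R%:M) = 0.
Proof.
rewrite [A *m (_ + _)]mulmxDr mul_mx_scalar complete_multipartite_mx_sqr subrK.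
by rewrite -scalemxAl mulmxBr JA mul_mx_scalar subrr scaler0.
Qed.

Lemma mxtrace_complete_multipartite_mx : \tr A = 0.
Proof. by apply: big1 => i _; rewrite mxE eqxx. Qed.

Lemma mxtrace_complete_multipartite_mx_sqr : \tr (A *m A) = (n * (n - s))%:R.
Proof.
rewrite complete_multipartite_mx_sqr raddfB /= !mxtraceZ mxtrace_complete_multipartite_mx.
rewrite mulr0 subr0 /mxtrace (eq_bigr (fun=> 1)) => [|i _]; last by rewrite mxE.
by rewrite sumr_const card_ord n_eq mulSnr addnK [RHS]natrM mulrC.
Qed.
End CompleteMultipartiteGraph.

Theorem char_poly_complete_multipartite_mx (R : numFieldType) (T : eqType) n
    (part : 'I_n -> T) (s q : nat) (c e : R) :
  (forall i, #|[pred j | part j == part i]| = s) -> n = (q.+1 * s)%N ->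
  (0 < s)%N -> (0 < q)%N ->
  char_poly (c%:M + e *: complete_multipartite_mx R part) =
    ('X - c%:P) ^+ (n - q.+1) * ('X - (c - e * s%:R)%:P) ^+ q
      * ('X - (c + e * (q * s)%:R)%:P).
Proof.
case: n part => [|n] part card_part n_eq s_gt0 q_gt0; first by move: n_eq s_gt0; nia.
have [ne01 ne02 ne12] := complete_multipartite_eigenvalues_neq R s_gt0 q_gt0.
have uniq_eigen : uniq [:: 0; - s%:R; (q * s)%:R :> R].
  by rewrite /= !inE !negb_or ne01 ne02 ne12.
have annA : horner_mx (complete_multipartite_mx R part)
    (\prod_(r <- [:: 0; - s%:R; (q * s)%:R]) ('X - r%:P)) = 0.
  rewrite horner_mx_prod_XsubC !big_cons big_nil mulr1 -!mulmxE raddf0 subr0.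
  by rewrite raddfN /= opprK mulmxA (complete_multipartite_mx_cubic R card_part n_eq).
have [V [d [Vu eA d_eigen]]] := uconj_diag_split_annihilator uniq_eigen annA.
have sum_d : \sum_i d 0 i = 0.
  by rewrite -mxtrace_diag -(mxtrace_uconj _ Vu) -eA mxtrace_complete_multipartite_mx.
have sum_d2 : \sum_i d 0 i ^+ 2 = (n.+1 * (n.+1 - s))%:R.
  rewrite -(mxtrace_complete_multipartite_mx_sqr R card_part n_eq) eA mulmx_uconj //.
  by rewrite mxtrace_uconj // mulmx_diag mxtrace_diag; apply: eq_bigr => i _; rewrite mxE expr2.
have [c0 c1 c2] := card_complete_multipartite_eigenvalues s_gt0 q_gt0 n_eq d_eigen sum_d sum_d2.
rewrite eA char_poly_uconj_diag // (prod_three_values (fun x => 'X - (c + e * x)%:P) d_eigen) //.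
by rewrite c0 c1 c2 mulr0 addr0 mulrN expr1.
Qed.

Lemma card_enum_val_pred (T : finType) (A : {set T}) (P : pred T) :
  #|[pred i : 'I_#|A| | P (enum_val i)]| = #|[set x in A | P x]|.
Proof.
rewrite -(card_imset _ enum_val_inj); apply: eq_card => x; rewrite !inE.
apply/imsetP/andP => [[i Pi ->] | [Ax Px]]; first by rewrite enum_valP.
by exists (enum_rank_in Ax x); rewrite ?inE enum_rankK_in.
Qed.

Section CentreOfIndexP2.
Local Open Scope group_scope.
Variables (gT : finGroupType) (G : {group gT}) (p m : nat).
Hypotheses (p_pr : prime p) (oG : #|G| = (p ^ m)%N) (nabG : ~~ abelian G)
  (oZ : #|'Z(G)| = (p ^ (m - 2))%N).

Let p_gt1 : (1 < p)%N := prime_gt1 p_pr.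

Lemma exponent_gt2 : (2 < m)%N.
Proof.
rewrite ltnNge; apply: contra nabG => le_m2.
apply: (p2group_abelian (p := p)); first by rewrite /pgroup oG pnatX pnat_id.
by rewrite oG pfactorK.
Qed.

Let oG_sub (K : {group gT}) : K \subset G -> exists2 e, (e <= m)%N & #|K| = (p ^ e)%N.
Proof. by move=> sKG; apply/(dvdn_pfactor _ _ p_pr); rewrite -oG cardSg. Qed.

Lemma card_proper_center_sub (K : {group gT}) :
  'Z(G) \proper K -> K \subset G -> (p ^ (m - 1) <= #|K|)%N.
Proof.
move=> ltZK /oG_sub[e le_em oK].
have := cardSg (proper_sub ltZK); rewrite oZ oK dvdn_Pexp2l // => le_e.
have := proper_card ltZK; rewrite oZ oK ltn_exp2l // => lt_e.
by rewrite leq_exp2l //; lia.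
Qed.

Lemma card_proper_sub (K : {group gT}) : K \proper G -> (#|K| <= p ^ (m - 1))%N.
Proof.
move=> ltKG; have [e le_em oK] := oG_sub (proper_sub ltKG).
have := proper_card ltKG; rewrite oG oK ltn_exp2l // => lt_em.
by rewrite leq_exp2l //; lia.
Qed.

Local Notation noncentral := (G :\: 'Z(G)).

Lemma center_sub_cent1 x : x \in G -> 'Z(G) \subset 'C_G[x].
Proof.
move=> Gx; apply/subsetP => z /centerP[Gz cGz].
by apply/subcent1P; split; last exact/commute_sym/cGz.
Qed.

Lemma card_cent1_noncentral x : x \in noncentral -> #|'C_G[x]| = (p ^ (m - 1))%N.
Proof.
case/setDP => Gx notZx; apply/eqP; rewrite eqn_leq; apply/andP; split.
  apply: card_proper_sub; rewrite properEneq subcent1_sub andbT.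
  apply: contra notZx => /eqP eCG; apply/centerP; split=> // y Gy.
  by have /subcent1P[] : y \in 'C_G[x] by rewrite eCG.
apply: card_proper_center_sub; last exact: subcent1_sub.
rewrite properEneq center_sub_cent1 // andbT.
by apply: contraNneq notZx => ->; rewrite subcent1_id.
Qed.

(* 'C_G[x] :&: 'C_G[y] properly contains 'Z(G) (it contains x), so it is as large as both. *)
Lemma cent1_noncentral_commute x y : x \in noncentral -> y \in noncentral ->
  commute x y -> 'C_G[x] = 'C_G[y].
Proof.
move=> ncx ncy cxy; have [[Gx notZx] [Gy _]] := (setDP ncx, setDP ncy).
pose K := ('C_G[x] :&: 'C_G[y])%G.
have Kx : x \in K by rewrite inE subcent1_id //; apply/subcent1P.
have ltZK : 'Z(G) \proper K.
  rewrite properEneq subsetI !center_sub_cent1 // !andbT.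
  by apply: contraNneq notZx => ->.
have oK := card_proper_center_sub ltZK (subset_trans (subsetIl _ _) (subcent1_sub x G)).
have eK z : z \in noncentral -> K \subset 'C_G[z] -> K :=: 'C_G[z].
  by move=> ncz sKC; apply/eqP; rewrite eqEcard sKC card_cent1_noncentral.
by rewrite -(eK x) ?subsetIl // -(eK y) ?subsetIr.
Qed.

Lemma der1_sub_center : G^`(1) \subset 'Z(G).
Proof.
have nZG := normal_norm (center_normal G).
apply: (der1_min nZG); apply: (card_p2group_abelian p_pr).
rewrite card_quotient // -divgS ?center_sub // oG oZ -expnB ?prime_gt0 ?leq_subr //.
by congr (_ ^ _)%N; have := exponent_gt2; lia.
Qed.

(* x ^ g = x * [~ x, g], and the commutator is central. *)
Lemma commute_conjg x g : x \in G -> g \in G -> commute x (x ^ g).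
Proof.
move=> Gx Gg; have /centerP[_ cZ] : [~ x, g] \in 'Z(G).
  by apply: (subsetP der1_sub_center); rewrite derg1 mem_commg.
by rewrite conjg_mulR; apply: commuteM => //; apply/commute_sym/cZ.
Qed.

Lemma conjg_noncentral x g : x \in noncentral -> g \in G -> x ^ g \in noncentral.
Proof.
case/setDP => Gx notZx Gg; rewrite inE (groupJ Gx Gg) andbT memJ_norm //.
exact: subsetP (normal_norm (center_normal G)) g Gg.
Qed.

Lemma cent1_class x y : x \in noncentral -> y \in x ^: G -> 'C_G[y] = 'C_G[x].
Proof.
move=> ncx /imsetP[g Gg ->]; have Gx := (setDP ncx).1.
by rewrite (cent1_noncentral_commute ncx (conjg_noncentral ncx Gg) (commute_conjg Gx Gg)).
Qed.

Lemma card_class_noncentral x : x \in noncentral -> #|x ^: G| = p.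
Proof.
move=> ncx; rewrite -index_cent1 -divgS ?subcent1_sub // card_cent1_noncentral // oG.
rewrite -expnB ?prime_gt0 ?leq_subr // subKn ?expn1 //.
by have := exponent_gt2; lia.
Qed.

Definition vertex_cent (C : {set gT}) := 'C_G[repr C].

Lemma vertex_centE x : x \in noncentral -> vertex_cent (x ^: G) = 'C_G[x].
Proof. by move=> ncx; apply: cent1_class ncx (mem_repr _ (class_refl G x)). Qed.

Lemma nccc_adjE x y : x \in noncentral -> y \in noncentral ->
  nccc_adj (x ^: G) (y ^: G) = ('C_G[x] != 'C_G[y]).
Proof.
move=> ncx ncy; have Gx := (setDP ncx).1.
have [eC | neC] := eqVneq 'C_G[x] 'C_G[y].
  apply/negbTE; rewrite negb_and negb_forall; apply/orP; right.
  apply/existsP; exists x; rewrite class_refl /= negb_forall.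
  apply/existsP; exists y; rewrite class_refl negbK /=.
  by apply/eqP; have /subcent1P[] : x \in 'C_G[y] by rewrite -eC subcent1_id.
rewrite /nccc_adj; apply/andP; split.
  by apply: contraNneq neC => eCD; rewrite -!vertex_centE // eCD.
apply/forall_inP => x' x'C; apply/forall_inP => y' y'D; apply/eqP => cx'y'.
have [ncx' ncy'] : x' \in noncentral /\ y' \in noncentral.
  by case/imsetP: x'C => g Gg ->; case/imsetP: y'D => h Gh ->;
     split; apply: conjg_noncentral.
move/eqP: neC; apply; rewrite -(cent1_class ncx x'C) -(cent1_class ncy y'D).
exact: cent1_noncentral_commute.
Qed.

Lemma card_conj_closed_noncentral (S : {set gT}) : S \subset noncentral ->
  (forall x g, x \in S -> g \in G -> x ^ g \in S) ->
  #|S| = (p * #|[set x ^: G | x in S]|)%N.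
Proof.
move=> sS clS; have actsGS : [acts G, on S | 'J].
  apply/actsP => g Gg x /=; apply/idP/idP => [Sxg | /clS-> //].
  by rewrite -(conjgK g x) clS ?groupV.
have -> : [set x ^: G | x in S] = orbit 'J G @: S by apply: eq_imset => x.
rewrite (card_partition (orbit_partition actsGS)) mulnC -sum_nat_const.
by apply: eq_bigr => _ /imsetP[x Sx ->]; rewrite orbitJ card_class_noncentral ?(subsetP sS).
Qed.

Let pow_split : [/\ (p ^ m = p * (p * (p * p ^ (m - 3))))%N,
  (p ^ (m - 1) = p * (p * p ^ (m - 3)))%N & (p ^ (m - 2) = p * p ^ (m - 3))%N].
Proof.
have m_gt2 := exponent_gt2; rewrite -!expnS.
by split; congr (_ ^ _)%N; lia.
Qed.

Lemma card_nccc_vertices : #|nccc_vertices G| = (p.+1 * ((p - 1) * p ^ (m - 3)))%N.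
Proof.
apply/eqP; rewrite -(eqn_pmul2l (prime_gt0 p_pr)) -card_conj_closed_noncentral //.
- rewrite cardsDS ?center_sub // oG oZ; have [-> _ ->] := pow_split.
  have := p_gt1; move: (p ^ (m - 3))%N => q p_gt1'; apply/eqP.
  rewrite mulnBl mul1n !mulnBr; nia.
- by move=> x g ncx Gg; apply: conjg_noncentral.
Qed.

Lemma card_vertices_cent x0 : x0 \in noncentral ->
  #|[set C in nccc_vertices G | vertex_cent C == 'C_G[x0]]| = ((p - 1) * p ^ (m - 3))%N.
Proof.
move=> ncx0; have Gx0 := (setDP ncx0).1; set H := 'C_G[x0].
have ncH x : x \in H :\: 'Z(G) -> x \in noncentral.
  by case/setDP => Hx notZx; rewrite inE notZx (subsetP (subcent1_sub x0 G)).
have cent1H x : x \in H :\: 'Z(G) -> 'C_G[x] = H.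
  move=> HZx; have /setDP[/subcent1P[_ cxx0] _] := HZx.
  exact/esym/(cent1_noncentral_commute ncx0 (ncH x HZx))/commute_sym.
have -> : [set C in nccc_vertices G | vertex_cent C == H] = [set x ^: G | x in H :\: 'Z(G)].
  apply/setP => C; rewrite inE; apply/andP/imsetP => [[/imsetP[x ncx ->]] | [x HZx ->]].
    rewrite vertex_centE // => /eqP <-; exists x => //.
    by rewrite inE (setDP ncx).2 subcent1_id // (setDP ncx).1.
  by rewrite vertex_centE ?ncH // cent1H //; split; first exact/imset_f/ncH.
apply/eqP; rewrite -(eqn_pmul2l (prime_gt0 p_pr)) -card_conj_closed_noncentral.
- rewrite cardsDS ?center_sub_cent1 // card_cent1_noncentral // oZ.
  have [_ -> ->] := pow_split; have := p_gt1; move: (p ^ (m - 3))%N => q p_gt1'.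
  by apply/eqP; rewrite mulnBl mul1n !mulnBr; nia.
- by apply/subsetP => x /ncH.
- move=> x g HZx Gg; have ncxg := conjg_noncentral (ncH x HZx) Gg.
  rewrite inE (setDP ncxg).2 -(cent1H x HZx) -(cent1_class (ncH x HZx) (memJ_class x Gg)).
  by rewrite subcent1_id // (setDP ncxg).1.
Qed.

Lemma card_enum_val_vertex_cent (i : 'I_(nccc_n G)) :
  #|[pred j : 'I_(nccc_n G) | vertex_cent (enum_val j) == vertex_cent (enum_val i)]|
    = ((p - 1) * p ^ (m - 3))%N.
Proof.
have [x ncx ->] := imsetP (enum_valP i); rewrite -(card_vertices_cent ncx) vertex_centE //.
exact: card_enum_val_pred.
Qed.

Lemma nccc_A_complete_multipartite :
  nccc_A G = complete_multipartite_mx algC (fun i : 'I_(nccc_n G) => vertex_cent (enum_val i)).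
Proof.
apply/matrixP => i j; rewrite !mxE.
have [x ncx ->] := imsetP (enum_valP i); have [y ncy ->] := imsetP (enum_valP j).
by rewrite nccc_adjE // !vertex_centE.
Qed.
End CentreOfIndexP2.

Lemma is_spectrum_big n (M : 'M[algC]_n) (s1 s2 : seq algC) (F : algC -> algC) :
  is_spectrum M s1 -> is_spectrum M s2 -> \sum_(l <- s1) F l = \sum_(l <- s2) F l.
Proof. by move=> sp1 sp2; apply/perm_big/prod_XsubC_eq; rewrite -sp1 -sp2. Qed.

Lemma is_spectrum_cat3 n (M : 'M[algC]_n) (k1 k2 k3 : nat) (x y z : algC) :
  char_poly M = ('X - x%:P) ^+ k1 * ('X - y%:P) ^+ k2 * ('X - z%:P) ^+ k3 ->
  is_spectrum M (nseq k1 x ++ nseq k2 y ++ nseq k3 z).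
Proof. by rewrite /is_spectrum !big_cat !big_nseq /= !iter_mulr_1 mulrA. Qed.

Section NcccSpectrum.
Variables (gT : finGroupType) (G : {group gT}) (p m : nat).
Hypotheses (p_pr : prime p) (oG : #|G| = (p ^ m)%N) (nabG : ~~ abelian G)
  (oZ : #|'Z(G)%g| = (p ^ (m - 2))%N).

Local Notation psize := ((p - 1) * p ^ (m - 3))%N.
Local Notation k := ((p + 1) * (psize - 1))%N.
Local Notation a := (psize%:R : algC).
Local Notation b := (((p - 1) * p ^ (m - 2))%:R : algC).
Local Notation c := (((p ^ 2 - 1) * p ^ (m - 3))%:R : algC).
Local Notation d := (((p - 1) ^ 2 * p ^ (m - 3))%:R : algC).

Let m_gt2 : (2 < m)%N := exponent_gt2 p_pr oG nabG.
Let p_gt1 : (1 < p)%N := prime_gt1 p_pr.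
Let psize_gt0 : (0 < psize)%N. Proof. by rewrite muln_gt0 subn_gt0 p_gt1 expn_gt0 ltnW. Qed.

Let pow_m2 : (p ^ (m - 2) = p * p ^ (m - 3))%N.
Proof. by rewrite -expnS; congr (_ ^ _)%N; lia. Qed.

Let ppsize : (p * psize = (p - 1) * p ^ (m - 2))%N. Proof. by rewrite pow_m2 mulnCA. Qed.

Let n_eq := card_nccc_vertices p_pr oG nabG oZ.
Let card_part := card_enum_val_vertex_cent p_pr oG nabG oZ.
Let A_eq := nccc_A_complete_multipartite p_pr oG nabG oZ.

Let bE : b = p%:R * a. Proof. by rewrite -natrM ppsize. Qed.

Let cE : c = b + a.
Proof. by apply/eqP; rewrite -natrD eqr_nat pow_m2; apply/eqP; move: (p ^ (m - 3))%N; nia. Qed.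

Let dE : d = b - a.
Proof.
apply/eqP; rewrite eq_sym subr_eq -natrD eqr_nat pow_m2; apply/eqP.
by move: (p ^ (m - 3))%N; nia.
Qed.

Let twobE : 2 * b = b + b. Proof. by rewrite mulr_natl mulr2n. Qed.

Lemma nccc_row_sum i : \sum_j nccc_A G i j = b.
Proof. by rewrite A_eq -ppsize; exact (complete_multipartite_mx_row_sum algC card_part n_eq i). Qed.

Lemma nccc_D_scalar : nccc_D G = b%:M.
Proof. by apply/matrixP => i j; rewrite !mxE nccc_row_sum. Qed.

Lemma nccc_Delta_eq : nccc_Delta G = b.
Proof.
rewrite /nccc_Delta (eq_bigr (fun=> b)) => [|i _]; last exact: nccc_row_sum.
rewrite sumr_const card_ord -[_ *+ nccc_n G]mulr_natr mulfK // pnatr_eq0 -lt0n.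
by rewrite [nccc_n G]n_eq muln_gt0 psize_gt0.
Qed.

Lemma char_poly_nccc (x e : algC) :
  char_poly (x%:M + e *: nccc_A G) =
    ('X - x%:P) ^+ k * ('X - (x - e * a)%:P) ^+ p * ('X - (x + e * b)%:P).
Proof.
rewrite A_eq (char_poly_complete_multipartite_mx _ _ card_part n_eq psize_gt0 (prime_gt0 p_pr)).
by rewrite ppsize [nccc_n G]n_eq addn1 mulnBr muln1.
Qed.

Lemma nccc_A_spectrum : is_spectrum (nccc_A G) (nseq k 0 ++ nseq p (- a) ++ nseq 1 b).
Proof.
apply: is_spectrum_cat3; have := char_poly_nccc 0 1.
by rewrite raddf0 add0r scale1r !mul1r sub0r add0r expr1.
Qed.

Lemma nccc_L_spectrum : is_spectrum (nccc_L G) (nseq 1 0 ++ nseq k b ++ nseq p c).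
Proof.
apply: is_spectrum_cat3; have := char_poly_nccc b (-1).
rewrite scaleN1r !mulN1r opprK subrr -cE /nccc_L nccc_D_scalar => ->.
by rewrite expr1 mulrC mulrA.
Qed.

Lemma nccc_Q_spectrum : is_spectrum (nccc_Q G) (nseq k b ++ nseq p d ++ nseq 1 (2 * b)).
Proof.
apply: is_spectrum_cat3; have := char_poly_nccc b 1.
by rewrite scale1r !mul1r -dE /nccc_Q nccc_D_scalar twobE expr1.
Qed.

Let energy_sum : `|a| *+ p + `|b| = 2 * b.
Proof. by rewrite !ger0_norm ?ler0n // -[a *+ p]mulr_natl -bE twobE. Qed.

Lemma nccc_energy sp : is_spectrum (nccc_A G) sp -> \sum_(l <- sp) `|l| = 2 * b.
Proof.
move/(is_spectrum_big _ nccc_A_spectrum) <-; rewrite !big_cat !big_nseq /= !iter_addr_0.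
by rewrite normr0 mul0rn add0r addr0 normrN.
Qed.

Lemma nccc_Laplacian_energy sp :
  is_spectrum (nccc_L G) sp -> \sum_(l <- sp) `|l - nccc_Delta G| = 2 * b.
Proof.
move/(is_spectrum_big _ nccc_L_spectrum) <-; rewrite !big_cat !big_nseq /= !iter_addr_0.
rewrite nccc_Delta_eq addr0 sub0r normrN subrr normr0 mul0rn add0r cE addrAC subrr add0r.
by rewrite addrC.
Qed.

Lemma nccc_signless_Laplacian_energy sp :
  is_spectrum (nccc_Q G) sp -> \sum_(l <- sp) `|l - nccc_Delta G| = 2 * b.
Proof.
move/(is_spectrum_big _ nccc_Q_spectrum) <-; rewrite !big_cat !big_nseq /= !iter_addr_0.
rewrite nccc_Delta_eq subrr normr0 mul0rn add0r dE addrAC subrr add0r normrN addr0.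
by rewrite [in `|_ - b|]twobE addrK.
Qed.
End NcccSpectrum.

Theorem corollary2p4 (gT : finGroupType) (G : {group gT}) (p m : nat) :
  prime p -> #|G| = (p ^ m)%N -> ~~ abelian G -> #|'Z(G)%g| = (p ^ (m - 2))%N ->
  let k := ((p + 1) * ((p - 1) * p ^ (m - 3) - 1))%N in
  let a : algC := ((p - 1) * p ^ (m - 3))%N%:R in
  let b : algC := ((p - 1) * p ^ (m - 2))%N%:R in
  let c : algC := ((p ^ 2 - 1) * p ^ (m - 3))%N%:R in
  let d : algC := ((p - 1) ^ 2 * p ^ (m - 3))%N%:R in
  let A := nccc_A G in
  let L := nccc_L G in
  let Q := nccc_Q G in
  let Delta := nccc_Delta G in
  [/\ is_spectrum A (nseq k 0 ++ nseq p (- a) ++ nseq 1 b),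
      is_spectrum L (nseq 1 0 ++ nseq k b ++ nseq p c),
      is_spectrum Q (nseq k b ++ nseq p d ++ nseq 1 (2 * b))
    & [/\
      (forall s, is_spectrum A s -> \sum_(l <- s) `|l| = 2 * b),
      (forall s, is_spectrum L s -> \sum_(l <- s) `|l - Delta| = 2 * b)
    & (forall s, is_spectrum Q s -> \sum_(l <- s) `|l - Delta| = 2 * b)]].
Proof.
move=> p_pr oG nabG oZ k a b c d A L Q Delta.
split; [exact: nccc_A_spectrum | exact: nccc_L_spectrum | exact: nccc_Q_spectrum |].
split; [exact: nccc_energy | exact: nccc_Laplacian_energy | exact: nccc_signless_Laplacian_energy].
Qed.
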